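(* Let $(X,d)$ be a complete metric space, $k\ge2$, $0<\rho<1$, and $\nu$ a coordinatewise $\rho$-contractive $(k+1)$-mean on $X$. Then $\nu$ admits exactly one stable reduction; moreover, if $\nu$ is symmetric, this stable reduction is symmetric.
   Context: A $k$-mean is a map $\mu:X^k\to X$ with $\mu(x,\ldots,x)=x$; symmetric means invariant under permutations of arguments. Coordinatewise $\rho$-contractive: $d(\nu(\mathbf{x}),\nu(\mathbf{y}))\le\rho\,d(x_j,y_j)$ whenever $\mathbf{x},\mathbf{y}$ differ only in coordinate $j$. A $k$-mean $\mu$ is a stable reduction of the $(k+1)$-mean $\nu$ if $\nu(x_1,\ldots,x_k,\mu(x_1,\ldots,x_k))=\mu(x_1,\ldots,x_k)$ for all $x_1,\ldots,x_k\in X$. *)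

From mathcomp Require Import all_boot all_order all_fingroup.
From Stdlib Require Import Reals.
Set Implicit Arguments. Unset Strict Implicit. Unset Printing Implicit Defensive.
Local Open Scope R_scope.

Definition is_metric (X : Type) (d : X -> X -> R) : Prop :=
  (forall x y, 0 <= d x y) /\
  (forall x y, d x y = 0 <-> x = y) /\
  (forall x y, d x y = d y x) /\
  (forall x y z, d x z <= d x y + d y z).

Definition cauchy_seq (X : Type) (d : X -> X -> R) (u : nat -> X) : Prop :=
  forall eps, 0 < eps -> exists N : nat,
    forall m n : nat, (N <= m)%nat -> (N <= n)%nat -> d (u m) (u n) < eps.

Definition converges_to (X : Type) (d : X -> X -> R) (u : nat -> X) (l : X) : Prop :=
  forall eps, 0 < eps -> exists N : nat, forall n : nat, (N <= n)%nat -> d (u n) l < eps.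

Definition complete_metric (X : Type) (d : X -> X -> R) : Prop :=
  is_metric d /\
  forall u : nat -> X, cauchy_seq d u -> exists l, converges_to d u l.

Definition is_mean (X : Type) (k : nat) (mu : ('I_k -> X) -> X) : Prop :=
  forall x : X, mu (fun _ => x) = x.

Definition symmetric_mean (X : Type) (k : nat) (mu : ('I_k -> X) -> X) : Prop :=
  forall (s : {perm 'I_k}) (x : 'I_k -> X), mu (fun i => x (s i)) = mu x.

Definition coord_contractive (X : Type) (d : X -> X -> R) (k : nat) (rho : R)
    (nu : ('I_k -> X) -> X) : Prop :=
  forall (x y : 'I_k -> X) (j : 'I_k),
    (forall i, i <> j -> x i = y i) -> d (nu x) (nu y) <= rho * d (x j) (y j).

(* The (k+1)-tuple (x_1, ..., x_k, m). *)
Definition snoc_tuple (X : Type) (k : nat) (x : 'I_k -> X) (m : X) : 'I_k.+1 -> X :=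
  fun i => match unlift ord_max i with Some j => x j | None => m end.

Definition stable_reduction (X : Type) (k : nat) (mu : ('I_k -> X) -> X)
    (nu : ('I_k.+1 -> X) -> X) : Prop :=
  is_mean mu /\ forall x : 'I_k -> X, nu (snoc_tuple x (mu x)) = mu x.

(* For fixed x, the map m |-> nu (x, m) is a rho-contraction of the complete
   space X, so by Banach's principle it has exactly one fixed point mu x; a
   stable reduction is precisely a choice of these fixed points, hence exists
   and is unique.  Permuting x amounts to permuting the first k arguments of
   nu, which does not change the map when nu is symmetric, so its fixed point
   mu x is permutation invariant. *)
From mathcomp Require Import all_boot all_order all_fingroup.
From Stdlib Require Import Reals Lra Psatz FunctionalExtensionality ClassicalEpsilon.
Set Implicit Arguments. Unset Strict Implicit. Unset Printing Implicit Defensive.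
Local Open Scope R_scope.

Definition contraction (X : Type) (d : X -> X -> R) (rho : R) (f : X -> X) : Prop :=
  forall a b, d (f a) (f b) <= rho * d a b.

Section ContractionMapping.

Variables (X : Type) (d : X -> X -> R) (rho : R) (f : X -> X).
Hypothesis d_metric : is_metric d.
Hypothesis rho_ge0 : 0 <= rho.
Hypothesis rho_lt1 : rho < 1.
Hypothesis f_contr : contraction d rho f.

Lemma dist_ge0 a b : 0 <= d a b.
Proof. by case: d_metric. Qed.

Lemma dist_eq0 a b : d a b = 0 <-> a = b.
Proof. by case: d_metric => _ []. Qed.

Lemma dist_sym a b : d a b = d b a.
Proof. by case: d_metric => _ [_ []]. Qed.

Lemma dist_triangle a b c : d a c <= d a b + d b c.
Proof. by case: d_metric => _ [_ [_]]. Qed.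

Lemma contraction_fixpoint_unique a b : f a = a -> f b = b -> a = b.
Proof.
move=> fa fb; apply/dist_eq0.
have := f_contr a b; rewrite fa fb; have := dist_ge0 a b; nra.
Qed.

Lemma dist_iter_shift a n p :
  d (iter n f a) (iter (n + p) f a) <= rho ^ n * d a (iter p f a).
Proof.
elim: n => [|n IHn]; first by rewrite add0n /=; lra.
rewrite addSn /=; apply: Rle_trans (f_contr _ _) _.
have := pow_le rho n rho_ge0; nra.
Qed.

Lemma dist_orbit_le a p : d a (iter p f a) <= d a (f a) / (1 - rho).
Proof.
have step : d a (f a) + rho * (d a (f a) / (1 - rho)) = d a (f a) / (1 - rho).
  by field; lra.
elim: p => [|p IHp] /=.
  rewrite (proj2 (dist_eq0 a a) erefl).
  by apply: Rmult_le_pos; [apply: dist_ge0 | apply/Rlt_le/Rinv_0_lt_compat; lra].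
apply: Rle_trans (dist_triangle a (f a) _) _; rewrite -[X in _ <= X]step.
apply: Rplus_le_compat_l; apply: Rle_trans (f_contr _ _) _.
exact: Rmult_le_compat_l.
Qed.

Lemma orbit_cauchy a : cauchy_seq d (fun n => iter n f a).
Proof.
set B := d a (f a) / (1 - rho).
have B_ge0 : 0 <= B by apply: Rle_trans (dist_orbit_le a 0); apply: dist_ge0.
move=> eps eps_gt0.
have rho_abs : Rabs rho < 1 by rewrite Rabs_right; lra.
have [N rhoN] := pow_lt_1_zero rho rho_abs (eps / (B + 1))
  ltac:(apply: Rdiv_lt_0_compat; lra).
suff near_le : forall m n, (N <= m)%nat -> (m <= n)%nat ->
    d (iter m f a) (iter n f a) < eps.
  exists N => m n Nm Nn; case: (leqP m n) => [mn | /ltnW nm].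
    exact: near_le.
  by rewrite dist_sym; apply: near_le.
move=> m n /leP Nm mn; rewrite -(subnKC mn).
apply: Rle_lt_trans (dist_iter_shift _ _ _) _.
have := rhoN m Nm; rewrite Rabs_right; last exact/Rle_ge/pow_le.
have := dist_orbit_le a (n - m); rewrite -/B.
have := pow_le rho m rho_ge0.
have := Rmult_lt_compat_r (B + 1) (rho ^ m) (eps / (B + 1)) ltac:(lra).
rewrite /Rdiv Rmult_assoc Rinv_l; nra.
Qed.

Lemma orbit_limit_fixed a l : converges_to d (fun n => iter n f a) l -> f l = l.
Proof.
move=> orbit_l; apply/dist_eq0.
case: (Rle_lt_or_eq_dec _ _ (dist_ge0 (f l) l)) => [gap_gt0 | //].
have [N near_l] := orbit_l (d (f l) l / 2) ltac:(lra).
have := near_l N (leqnn N); have /= := near_l N.+1 (leqnSn N).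
have := dist_triangle (f l) (f (iter N f a)) l.
have := f_contr l (iter N f a); rewrite dist_sym (dist_sym l).
have := dist_ge0 (iter N f a) l; nra.
Qed.

Lemma contraction_fixpoint_exists (a : X) :
  complete_metric d -> exists l, f l = l.
Proof.
move=> [_ cauchy_cvg]; have [l orbit_l] := cauchy_cvg _ (orbit_cauchy a).
by exists l; apply: orbit_limit_fixed orbit_l.
Qed.

End ContractionMapping.

Section SnocTuple.

Variables (X : Type) (k : nat).

Lemma snoc_tuple_max (x : 'I_k -> X) m : snoc_tuple x m ord_max = m.
Proof. by rewrite /snoc_tuple unlift_none. Qed.

Lemma snoc_tuple_lift (x : 'I_k -> X) m j : snoc_tuple x m (lift ord_max j) = x j.
Proof. by rewrite /snoc_tuple liftK. Qed.

Lemma snoc_tuple_const (x : X) : snoc_tuple (fun _ : 'I_k => x) x = (fun _ => x).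
Proof. by apply: functional_extensionality => i; rewrite /snoc_tuple; case: unlift. Qed.

Lemma snoc_tuple_perm (s : {perm 'I_k}) (x : 'I_k -> X) m :
  snoc_tuple (fun i => x (s i)) m
  = (fun i => snoc_tuple x m (lift_perm ord_max ord_max s i)).
Proof.
apply: functional_extensionality => i.
case: (unliftP ord_max i) => [j ->|->].
  by rewrite lift_perm_lift !snoc_tuple_lift.
by rewrite lift_perm_id !snoc_tuple_max.
Qed.

End SnocTuple.

Section StableReduction.

Variables (X : Type) (d : X -> X -> R) (k : nat) (rho : R).
Variable nu : ('I_k.+1 -> X) -> X.
Hypothesis d_metric : is_metric d.
Hypothesis rho_ge0 : 0 <= rho.
Hypothesis rho_lt1 : rho < 1.
Hypothesis nu_contr : coord_contractive d rho nu.

Lemma coord_contractive_last (x : 'I_k -> X) :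
  contraction d rho (fun m => nu (snoc_tuple x m)).
Proof.
move=> a b; have := @nu_contr (snoc_tuple x a) (snoc_tuple x b) ord_max.
rewrite !snoc_tuple_max; apply=> i /eqP i_ne_max.
by case: (unliftP ord_max i) i_ne_max => [j ->|->]; rewrite ?snoc_tuple_lift ?eqxx.
Qed.

Lemma stable_reduction_fixed_unique (x : 'I_k -> X) a b :
  nu (snoc_tuple x a) = a -> nu (snoc_tuple x b) = b -> a = b.
Proof. exact: contraction_fixpoint_unique d_metric rho_lt1 (coord_contractive_last x) a b. Qed.

Lemma stable_reduction_unique (mu mu' : ('I_k -> X) -> X) :
  stable_reduction mu nu -> stable_reduction mu' nu -> mu = mu'.
Proof.
move=> [_ mu_fixed] [_ mu'_fixed]; apply: functional_extensionality => x.
exact: stable_reduction_fixed_unique (mu_fixed x) (mu'_fixed x).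
Qed.

Lemma stable_reduction_exists :
  complete_metric d -> (0 < k)%nat -> is_mean nu -> exists mu, stable_reduction mu nu.
Proof.
move=> d_complete k_gt0 nu_mean.
have fixed x : exists m, nu (snoc_tuple x m) = m.
  exact: contraction_fixpoint_exists d_metric rho_ge0 rho_lt1
           (coord_contractive_last x) (x (Ordinal k_gt0)) d_complete.
have [mu mu_fixed] := choice _ fixed.
exists mu; split=> // x.
apply: (stable_reduction_fixed_unique (mu_fixed (fun _ => x))).
by rewrite snoc_tuple_const nu_mean.
Qed.

Lemma stable_reduction_symmetric (mu : ('I_k -> X) -> X) :
  symmetric_mean nu -> stable_reduction mu nu -> symmetric_mean mu.
Proof.
move=> nu_sym [_ mu_fixed] s x.
apply: (stable_reduction_fixed_unique (mu_fixed (fun i => x (s i)))).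
by rewrite snoc_tuple_perm nu_sym mu_fixed.
Qed.

End StableReduction.

Theorem proposition8p3 (X : Type) (d : X -> X -> R) (k : nat) (rho : R)
    (nu : ('I_k.+1 -> X) -> X) :
  complete_metric d -> (2 <= k)%nat -> (0 < rho)%R -> (rho < 1)%R ->
  is_mean nu -> coord_contractive d rho nu ->
  (exists mu : ('I_k -> X) -> X,
      stable_reduction mu nu /\
      forall mu' : ('I_k -> X) -> X, stable_reduction mu' nu -> mu' = mu) /\
  (symmetric_mean nu ->
   forall mu : ('I_k -> X) -> X, stable_reduction mu nu -> symmetric_mean mu).
Proof.
move=> d_complete k_ge2 rho_gt0 rho_lt1 nu_mean nu_contr.
have d_metric := proj1 d_complete.
have rho_ge0 : 0 <= rho by lra.
split; last first.
  by move=> nu_sym mu; exact (stable_reduction_symmetric d_metric rho_lt1 nu_contr nu_sym).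
have [mu mu_stable] :=
  stable_reduction_exists d_metric rho_ge0 rho_lt1 nu_contr d_complete
    (ltnW k_ge2) nu_mean.
exists mu; split=> // mu' mu'_stable.
exact (stable_reduction_unique d_metric rho_lt1 nu_contr mu'_stable mu_stable).
Qed.
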